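(* Let $X\in\mathbb{R}^{L\times S}$ be a matrix of location profiles, let $w_S\in\mathbb{R}^S$ and $w_L\in\mathbb{R}^L$ be weight vectors, and let $\Delta\in\mathbb{R}^{S\times S}$ and $\Sigma=\mathbf{1}_S v^T+v\mathbf{1}_S^T-\tfrac12\Delta$ (for some $v\in\mathbb{R}^S$) be as in the context, with $\Sigma$ positive definite. Let $P=I_S-\mathbf{1}_S w_S^T$ and $\tilde X=XP$. (DPCoA.) Let $U$ have as columns orthonormal eigenvectors of $D_{w_S}^{1/2}P(-\tfrac12\Delta)P^TD_{w_S}^{1/2}$ associated with its positive eigenvalues, collected in the diagonal matrix $\Lambda$, and put $Z=D_{w_S}^{-1/2}U\Lambda^{1/2}$ and $Y=XZ$. Let $r=\operatorname{rank}(Y)$, let $\Phi$ be the $r\times r$ diagonal matrix of the nonzero eigenvalues of $Y^TD_{w_L}Y$ in decreasing order, and let $F$ have as columns corresponding orthonormal eigenvectors ($F^TF=I_r$). The DPCoA location coordinates are $YF$ and the DPCoA species coordinates are $ZF$. (gPCA.) Let $\Psi$ be the diagonal matrix of the nonzero eigenvalues of $\tilde X^TD_{w_L}\tilde X\Sigma$ in decreasing order, and let $A\in\mathbb{R}^{S\times r'}$ have as columns corresponding eigenvectors normalized so that $A^T\Sigma A=I$. Then $r'=r$ and $\Psi=\Phi$. Moreover, if these nonzero eigenvalues are pairwise distinct, there is a diagonal matrix $E$ with diagonal entries in $\{+1,-1\}$ such that $$YF=\tilde X\Sigma A\,E\qquad\text{and}\qquad ZF=P\Sigma A\,E,$$ i.e.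 the location coordinates of DPCoA coincide with the gPCA coordinates $\tilde X\Sigma A$ of the triplet $(\tilde X,\Sigma,D_{w_L})$, and the DPCoA species coordinates coincide with $P\Sigma A$ (the images of the centered standard basis vectors $e_s$ under the gPCA transformation), up to the same column sign changes.
   Context: $S$ species and $L$ locations. $X\in\mathbb{R}^{L\times S}$ has nonnegative entries and each row sums to $1$ (each row is a location profile). $w_S\in\mathbb{R}^S$ and $w_L\in\mathbb{R}^L$ have strictly positive entries each summing to $1$; for a vector $w$, $D_w$ denotes the diagonal matrix with diagonal $w$, and $\mathbf{1}_m$ is the all-ones vector in $\mathbb{R}^m$. $\Delta\in\mathbb{R}^{S\times S}$ is a symmetric matrix with zero diagonal (a matrix of squared dissimilarities between species) which is Euclidean in the sense that $P(-\tfrac12\Delta)P^T$ is positive semidefinite, where $P=I_S-\mathbf{1}_Sw_S^T$. $v\in\mathbb{R}^S$ is any vector for which $\Sigma=\mathbf{1}_Sv^T+v\mathbf{1}_S^T-\tfrac12\Delta$ is positive definite. *)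

(* real closed field R (square roots needed). *)
From HB Require Import structures.
From mathcomp Require Import all_boot all_order all_algebra.
Set Implicit Arguments. Unset Strict Implicit. Unset Printing Implicit Defensive.
Import Order.TTheory GRing.Theory Num.Theory.
Local Open Scope ring_scope.

Section Defs.
Variable R : rcfType.

Definition ones (m : nat) : 'cV[R]_m := const_mx 1.

Definition Dw (n : nat) (w : 'rV[R]_n) : 'M[R]_n := diag_mx w.
Definition Dsqrt (n : nat) (w : 'rV[R]_n) : 'M[R]_n :=
  diag_mx (map_mx (fun x => Num.sqrt x) w).
Definition Dinvsqrt (n : nat) (w : 'rV[R]_n) : 'M[R]_n :=
  diag_mx (map_mx (fun x => (Num.sqrt x)^-1) w).

Definition Pmat (n : nat) (w : 'rV[R]_n) : 'M[R]_n := 1%:M - ones n *m w.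

Definition Sigma (n : nat) (v : 'cV[R]_n) (Delta : 'M[R]_n) : 'M[R]_n :=
  ones n *m v^T + v *m (ones n)^T - 2^-1 *: Delta.

Definition psd (n : nat) (M : 'M[R]_n) : Prop :=
  forall x : 'cV[R]_n, 0 <= (x^T *m M *m x) 0 0.

Definition posdef (n : nat) (M : 'M[R]_n) : Prop :=
  forall x : 'cV[R]_n, x != 0 -> 0 < (x^T *m M *m x) 0 0.

Definition weight (n : nat) (w : 'rV[R]_n) : Prop :=
  (forall i, 0 < w 0 i) /\ \sum_i w 0 i = 1.

Definition nonincreasing_diag (n : nat) (d : 'rV[R]_n) : Prop :=
  forall i j : 'I_n, (i <= j)%N -> d 0 j <= d 0 i.

End Defs.

From HB Require Import structures.
From mathcomp Require Import all_boot all_order all_algebra.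
From mathcomp Require Import ring lra zify.
Set Implicit Arguments. Unset Strict Implicit. Unset Printing Implicit Defensive.
Import Order.TTheory GRing.Theory Num.Theory.
Local Open Scope ring_scope.

(* The spectral data (U, Lambda)
   carry the whole nonzero spectrum of the psd matrix
   D^{1/2} P (-Delta/2) P^T D^{1/2}, so Z Z^T = P (-Delta/2) P^T = P Sigma P^T
   (the rank-two part of Sigma is killed by the centering P).  With
   K = (X P)^T D_wL (X P), Sylvester's identity for characteristic polynomials
   gives, up to powers of 'X,
      chi(Z^T (X^T D X Z)) ~ chi(X^T D X P Sigma P^T) ~ chi(P^T X^T D X P Sigma),
   i.e. chi(Y^T D Y) ~ chi(K Sigma),
   so both problems have the same nonzero eigenvalues with multiplicities;
   sorted in decreasing order they coincide, whence r' = r and psi = phi.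
   For the coordinates, F spans the row space of Y (a psd trace argument), so
   YF and the gPCA coordinates X P Sigma A are both D-orthogonal eigenvectors
   of Y Y^T D = X P Sigma P^T X^T D for the same simple eigenvalues; they
   therefore agree up to column signs, and the species coordinates follow by
   applying P Sigma P^T X^T D to both. *)

Section CharPolyProduct.
Variable R : comNzRingType.

Lemma char_poly_mulC (m n : nat) (A : 'M[R]_(m, n)) (B : 'M[R]_(n, m)) :
  'X^n * char_poly (A *m B) = 'X^m * char_poly (B *m A).
Proof.
set a := map_mx polyC A; set b := map_mx polyC B.
pose M := block_mx ('X%:M : 'M_m) a b (1%:M : 'M_n).
have lower : M *m block_mx 1%:M 0 (- b) 1%:M
    = block_mx (char_poly_mx (A *m B)) a 0 1%:M.
  rewrite mulmx_block !mulmx0 !mulmx1 !mul1mx !add0r !mulmxN addrN.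
  by rewrite /char_poly_mx map_mxM.
have upper : block_mx 1%:M 0 (- b) ('X%:M : 'M_n) *m M
    = block_mx ('X%:M : 'M_m) a 0 (char_poly_mx (B *m A)).
  rewrite mulmx_block !mul0mx !mul1mx !addr0 !mulNmx mul_mx_scalar mul_scalar_mx.
  by rewrite addNr mulmx1 addrC /char_poly_mx map_mxM.
have := congr1 determinant lower.
rewrite det_mulmx det_lblock det_ublock !det1 !mulr1 => detM.
have := congr1 determinant upper.
rewrite det_mulmx det_lblock det_ublock !det1 mul1r !det_scalar => detXM.
by rewrite /char_poly -detM -detXM mulrC.
Qed.

End CharPolyProduct.

Section Spectrum.
Variable R : fieldType.

Definition diag_seq (r : nat) (d : 'rV[R]_r) : seq R := [seq d 0 i | i <- enum 'I_r].

Lemma size_diag_seq (r : nat) (d : 'rV[R]_r) : size (diag_seq d) = r.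
Proof. by rewrite size_map size_enum_ord. Qed.

Lemma nth_diag_seq (r : nat) (d : 'rV[R]_r) (i : 'I_r) : nth 0 (diag_seq d) i = d 0 i.
Proof. by rewrite (nth_map i) ?size_enum_ord ?ltn_ord // nth_ord_enum. Qed.

Lemma prod_diag_seq (r : nat) (d : 'rV[R]_r) :
  \prod_(i < r) ('X - (d 0 i)%:P) = \prod_(x <- diag_seq d) ('X - x%:P).
Proof. by rewrite big_map big_enum. Qed.

Lemma polyXn_prod (n : nat) : 'X^n = \prod_(x <- nseq n (0 : R)) ('X - x%:P).
Proof.
elim: n => [|n IHn]; first by rewrite big_nil expr0.
by rewrite /= big_cons exprS IHn subr0.
Qed.

Lemma char_poly_factor_trace (k r : nat) (H : 'M[R]_k) (d : 'rV[R]_r) :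
  char_poly H = 'X^(k - r) * \prod_(i < r) ('X - (d 0 i)%:P) ->
  (r <= k)%N /\ \tr H = \sum_i d 0 i.
Proof.
move=> hH.
have r_le_k : (r <= k)%N.
  have := size_char_poly H.
  rewrite hH prod_diag_seq size_mul ?monic_neq0 ?monic_prod_XsubC ?monicXn //.
  rewrite size_polyXn size_prod_XsubC size_diag_seq /=; lia.
split => //; case: r d hH r_le_k => [|r] d hH r_le_k.
  rewrite big_ord0 subn0 mulr1 in hH; rewrite big_ord0.
  case: k H hH {r_le_k} => [|k] H hH; first by rewrite /mxtrace big_ord0.
  apply/eqP; rewrite -oppr_eq0 -char_poly_trace // hH coefXn /=.
  by rewrite (ltn_eqF (ltnSn k)).
apply: oppr_inj; rewrite -char_poly_trace; last by lia.
rewrite hH coefXnM ifF; last by apply/negbTE; rewrite -leqNgt; lia.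
have -> : (k.-1 - (k - r.+1) = (size (diag_seq d)).-1)%N by rewrite size_diag_seq; lia.
rewrite prod_diag_seq coefPn_prod_XsubC ?size_diag_seq //.
by rewrite /diag_seq big_map big_enum.
Qed.

Lemma nonzero_spectra_eq (k n r r' : nat) (H1 : 'M[R]_k) (H2 : 'M[R]_n)
    (d1 : 'rV[R]_r) (d2 : 'rV[R]_r') :
  'X^n * char_poly H1 = 'X^k * char_poly H2 ->
  char_poly H1 = 'X^(k - r) * \prod_(i < r) ('X - (d1 0 i)%:P) ->
  char_poly H2 = 'X^(n - r') * \prod_(i < r') ('X - (d2 0 i)%:P) ->
  (forall i, d1 0 i != 0) -> (forall i, d2 0 i != 0) ->
  r' = r /\ perm_eq (diag_seq d1) (diag_seq d2).
Proof.
move=> hX h1 h2 nz1 nz2.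
have [r_le_k _] := char_poly_factor_trace h1.
have [r'_le_n _] := char_poly_factor_trace h2.
have no_zero r0 (d : 'rV[R]_r0) : (forall i, d 0 i != 0) ->
    count (pred1 0) (diag_seq d) = 0%N.
  move=> nz; rewrite /diag_seq count_map; apply/eqP.
  by rewrite eqn0Ngt -has_count; apply/hasPn => i _; exact: nz.
move: hX; rewrite h1 h2 !mulrA -!exprD !prod_diag_seq !polyXn_prod -!big_cat.
move=> /prod_XsubC_eq roots_eq.
have := permP roots_eq (pred1 0).
rewrite !count_cat !count_nseq !no_zero //= eqxx /= !mul1n !addn0 => zeros_eq.
have r'r : r' = r by lia.
split => //; subst r'.
move: roots_eq; have -> : (n + (k - r) = k + (n - r))%N by lia.
by rewrite perm_cat2l.
Qed.

End Spectrum.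

Section Ordered.
Variable R : rcfType.

Lemma nonincreasing_diag_eq (r : nat) (d1 d2 : 'rV[R]_r) :
  nonincreasing_diag d1 -> nonincreasing_diag d2 ->
  perm_eq (diag_seq d1) (diag_seq d2) -> d1 = d2.
Proof.
have sorted_seq (d : 'rV[R]_r) :
    nonincreasing_diag d -> sorted (fun x y => y <= x) (diag_seq d).
  move=> hd; apply/(sortedP 0) => n; rewrite size_diag_seq => hn.
  have hn0 : (n < r)%N by lia.
  rewrite (nth_diag_seq d (Ordinal hn0)) (nth_diag_seq d (Ordinal hn)).
  exact: hd.
move=> h1 h2 hperm.
have seq_eq : diag_seq d1 = diag_seq d2.
  apply: (sorted_eq (leT := fun x y : R => y <= x)) hperm.
  - by move=> x y z hxy hyz; exact: le_trans hyz hxy.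
  - by move=> x y /andP [a b]; apply/eqP; rewrite eq_le a b.
  - exact: sorted_seq.
  - exact: sorted_seq.
by apply/matrixP => a i; rewrite [a]ord1 -!nth_diag_seq seq_eq.
Qed.

Lemma quad_form_delta (n : nat) (M : 'M[R]_n) (i j : 'I_n) :
  (delta_mx i (0 : 'I_1))^T *m M *m delta_mx j 0 = (M i j)%:M.
Proof. by apply/matrixP => a b; rewrite !ord1 trmx_delta -rowE -colE !mxE. Qed.

Lemma psd_trace_eq0 (n : nat) (M : 'M[R]_n) :
  M^T = M -> psd M -> \tr M = 0 -> M = 0.
Proof.
move=> Msym Mpsd Mtr.
have diag_ge0 i : 0 <= M i i.
  by have := Mpsd (delta_mx i 0); rewrite quad_form_delta mxE.
have diag0 i : M i i = 0.
  by move: Mtr; rewrite /mxtrace => /psumr_eq0P; apply.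
apply/matrixP => i j; rewrite mxE.
have [->|nij] := eqVneq i j; first exact: diag0.
pose x : 'cV[R]_n := delta_mx i 0 - M i j *: delta_mx j 0.
have xT : x^T = (delta_mx i 0)^T - M i j *: (delta_mx j 0)^T.
  by apply/matrixP => a b; rewrite !mxE.
have := Mpsd x; rewrite xT /x !mulmxBl !mulmxBr -!scalemxAl -!scalemxAr.
rewrite !quad_form_delta !mxE /= !mulr1n !diag0.
have -> : M j i = M i j by rewrite -{1}Msym mxE.
move: (M i j) => c hc.
have c2 : c * c <= 0 by nra.
by apply/eqP; rewrite -sqrf_eq0 eq_le sqr_ge0 andbT expr2.
Qed.

Lemma psd_spectral_decomposition (k r : nat) (H : 'M[R]_k) (F : 'M[R]_(k, r))
    (d : 'rV[R]_r) :
  H^T = H -> psd H -> F^T *m F = 1%:M -> H *m F = F *m diag_mx d ->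
  char_poly H = 'X^(k - r) * \prod_(i < r) ('X - (d 0 i)%:P) ->
  H = F *m diag_mx d *m F^T.
Proof.
move=> Hsym Hpsd FF HF hchar.
set G := F *m diag_mx d *m F^T.
set Q : 'M[R]_k := 1%:M - F *m F^T.
have Qsym : Q^T = Q by rewrite /Q [(_ - _)^T]raddfB /= trmx1 trmx_mul trmxK.
have FtH : F^T *m H = diag_mx d *m F^T.
  by apply: trmx_inj; rewrite !trmx_mul !trmxK Hsym HF tr_diag_mx.
have QH : Q *m H = H - G by rewrite /Q mulmxBl mul1mx -mulmxA FtH mulmxA.
have GF : (H - G) *m F = 0 by rewrite mulmxBl HF /G -!mulmxA FF mulmx1 subrr.
have QHQ : Q *m H *m Q = H - G.
  by rewrite QH /Q mulmxBr mulmx1 mulmxA GF mul0mx subr0.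
have Gsym : G^T = G by rewrite /G !trmx_mul trmxK tr_diag_mx mulmxA.
apply/eqP; rewrite -subr_eq0; apply/eqP; apply: psd_trace_eq0.
- by rewrite [(_ - _)^T]raddfB /= Hsym Gsym.
- move=> x; rewrite -QHQ.
  have -> : x^T *m (Q *m H *m Q) *m x = (Q *m x)^T *m H *m (Q *m x).
    by rewrite trmx_mul Qsym !mulmxA.
  exact: Hpsd.
- have trG : \tr G = \sum_i d 0 i.
    by rewrite /G mxtrace_mulC mulmxA FF mul1mx mxtrace_diag.
  by rewrite raddfB /= trG (char_poly_factor_trace hchar).2 subrr.
Qed.

Lemma weighted_gram_psd (m n : nat) (w : 'rV[R]_m) (Y : 'M[R]_(m, n)) :
  (forall l, 0 < w 0 l) -> psd (Y^T *m Dw w *m Y).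
Proof.
move=> wpos x.
have -> : x^T *m (Y^T *m Dw w *m Y) *m x = (Y *m x)^T *m diag_mx w *m (Y *m x).
  by rewrite trmx_mul !mulmxA.
rewrite mul_mx_diag !mxE; apply: sumr_ge0 => l _.
by rewrite !mxE mulrAC -expr2 mulr_ge0 ?sqr_ge0 // ltW.
Qed.

Lemma weighted_gram_eq0 (m n : nat) (w : 'rV[R]_m) (Y : 'M[R]_(m, n)) :
  (forall l, 0 < w 0 l) -> Y^T *m Dw w *m Y = 0 -> Y = 0.
Proof.
move=> wpos hY; apply/matrixP => l j; rewrite mxE.
have := congr1 (fun M : 'M[R]_n => M j j) hY.
rewrite mul_mx_diag !mxE => /psumr_eq0P sum0.
have term0 : w 0 l * Y l j ^+ 2 = 0.
  rewrite -[RHS](sum0 _ l) ?mxE //; first by ring.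
  by move=> i _; rewrite !mxE mulrAC -expr2 mulr_ge0 ?sqr_ge0 // ltW.
by move/eqP: term0; rewrite mulf_eq0 sqrf_eq0 (gt_eqF (wpos l)) => /eqP.
Qed.

Lemma eigvecs_span_rows (m k r : nat) (w : 'rV[R]_m) (Y : 'M[R]_(m, k))
    (F : 'M[R]_(k, r)) (d : 'rV[R]_r) :
  (forall l, 0 < w 0 l) -> F^T *m F = 1%:M ->
  (Y^T *m Dw w *m Y) *m F = F *m diag_mx d ->
  char_poly (Y^T *m Dw w *m Y) = 'X^(k - r) * \prod_(i < r) ('X - (d 0 i)%:P) ->
  Y *m F *m F^T = Y.
Proof.
move=> wpos FF HF hchar.
have Hsym : (Y^T *m Dw w *m Y)^T = Y^T *m Dw w *m Y.
  by rewrite !trmx_mul trmxK /Dw tr_diag_mx mulmxA.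
have hH := psd_spectral_decomposition Hsym (weighted_gram_psd Y wpos) FF HF hchar.
set Q : 'M[R]_k := 1%:M - F *m F^T.
have FtQ : F^T *m Q = 0 by rewrite /Q mulmxBr mulmx1 mulmxA FF mul1mx subrr.
have YQ : Y *m Q = 0.
  apply: (weighted_gram_eq0 wpos).
  have -> : (Y *m Q)^T *m Dw w *m (Y *m Q) = Q^T *m (Y^T *m Dw w *m Y) *m Q.
    by rewrite trmx_mul !mulmxA.
  by rewrite hH -!mulmxA FtQ !mulmx0.
by move: YQ; rewrite /Q mulmxBr mulmx1 mulmxA => /eqP; rewrite subr_eq0 => /eqP.
Qed.

End Ordered.

Section SignAmbiguity.
Variable R : fieldType.

Lemma diag_sign_invol (r : nat) (e : 'rV[R]_r) :
  (forall j, e 0 j = 1 \/ e 0 j = -1) -> diag_mx e *m diag_mx e = 1%:M.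
Proof.
move=> esign; apply/matrixP => i j; rewrite mul_diag_mx !mxE.
have e_sq : e 0 j * e 0 j = 1 by case: (esign j) => ->; rewrite ?mulrNN mulr1.
by case: eqVneq => [->|_]; rewrite ?mulr1n ?mulr0n ?mulr0 ?e_sq.
Qed.

Lemma eigvecs_unique_up_to_sign (n r : nat) (M : 'M[R]_n) (B C : 'M[R]_(n, r))
    (d : 'rV[R]_r) :
  (forall i j, d 0 i = d 0 j -> i = j) -> (forall i, d 0 i != 0) ->
  B^T *m M *m B = diag_mx d -> C^T *m M *m C = diag_mx d ->
  B *m B^T *m M *m C = C *m diag_mx d ->
  exists2 e : 'rV[R]_r, (forall j, e 0 j = 1 \/ e 0 j = -1) & C = B *m diag_mx e.
Proof.
move=> dsimple dnz BB CC BBC.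
set K := B^T *m M *m C.
have Kcomm : diag_mx d *m K = K *m diag_mx d.
  have -> : diag_mx d *m K = B^T *m M *m (B *m B^T *m M *m C).
    by rewrite -BB /K !mulmxA.
  by rewrite BBC /K !mulmxA.
have CdBK : C *m diag_mx d = B *m K by rewrite -BBC /K !mulmxA.
clearbody K.
have Kdiag i j : i != j -> K i j = 0.
  move=> nij; have := congr1 (fun N : 'M[R]_r => N i j) Kcomm.
  rewrite mul_diag_mx mul_mx_diag !mxE => hij.
  have : K i j * (d 0 i - d 0 j) = 0 by rewrite mulrBr mulrC hij subrr.
  move/eqP; rewrite mulf_eq0 subr_eq0 => /orP [/eqP //|/eqP /dsimple eij].
  by rewrite eij eqxx in nij.
pose e : 'rV[R]_r := \row_j (K j j / d 0 j).
have CBe : C = B *m diag_mx e.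
  apply/matrixP => l j; rewrite mul_mx_diag !mxE.
  have := congr1 (fun N : 'M[R]_(n, r) => N l j) CdBK.
  rewrite mul_mx_diag !mxE (bigD1 j) //= big1 ?addr0 => [hlj|i nij].
    by rewrite mulrA -hlj mulfK.
  by rewrite Kdiag ?mulr0.
have e_sq j : e 0 j * e 0 j = 1.
  have : diag_mx e *m diag_mx d *m diag_mx e = diag_mx d.
    by rewrite -{1}BB -CC CBe trmx_mul tr_diag_mx !mulmxA.
  move=> /(congr1 (fun N : 'M[R]_r => N j j)).
  rewrite mul_mx_diag mul_diag_mx !mxE eqxx mulr1n => hj.
  by apply: (mulIf (dnz j)); rewrite mul1r -[RHS]hj; ring.
exists e => // j; have := e_sq j; move/eqP; rewrite -expr2 sqrf_eq1.
by case/orP => /eqP; [left|right].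
Qed.

End SignAmbiguity.

Section Coordinates.
Variables (R : fieldType) (L S k r : nat).
Variables (X : 'M[R]_(L, S)) (D : 'M[R]_L) (P Sg : 'M[R]_S).
Variables (Z : 'M[R]_(S, k)) (F : 'M[R]_(k, r)) (A : 'M[R]_(S, r)) (d : 'rV[R]_r).
Hypothesis ZZt : Z *m Z^T = P *m Sg *m P^T.
Hypothesis Sg_sym : Sg^T = Sg.
Hypothesis F_orth : F^T *m F = 1%:M.
Hypothesis F_eig : ((X *m Z)^T *m D *m (X *m Z)) *m F = F *m diag_mx d.
Hypothesis A_norm : A^T *m Sg *m A = 1%:M.
Hypothesis A_eig : ((X *m P)^T *m D *m (X *m P) *m Sg) *m A = A *m diag_mx d.

Lemma dpcoa_gpca_char_poly :
  'X^S * char_poly ((X *m Z)^T *m D *m (X *m Z))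
  = 'X^k * char_poly ((X *m P)^T *m D *m (X *m P) *m Sg).
Proof.
have YtDY : (X *m Z)^T *m D *m (X *m Z) = Z^T *m (X^T *m D *m X *m Z).
  by rewrite trmx_mul !mulmxA.
have ZZtW : X^T *m D *m X *m Z *m Z^T = (X^T *m D *m X *m P *m Sg) *m P^T.
  by rewrite -mulmxA ZZt !mulmxA.
have KSg : P^T *m (X^T *m D *m X *m P *m Sg) = (X *m P)^T *m D *m (X *m P) *m Sg.
  by rewrite trmx_mul !mulmxA.
have := char_poly_mulC (X^T *m D *m X *m P *m Sg) P^T; rewrite KSg => hP.
have := char_poly_mulC Z^T (X^T *m D *m X *m Z); rewrite -YtDY ZZtW => ->.
have XS_neq0 : 'X^S != 0 :> {poly R} by rewrite expf_neq0 // polyX_eq0.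
by congr (_ * _); apply: (mulfI XS_neq0).
Qed.

Lemma dpcoa_location_gram :
  (X *m Z *m F)^T *m D *m (X *m Z *m F) = diag_mx d.
Proof.
have -> : (X *m Z *m F)^T *m D *m (X *m Z *m F)
    = F^T *m ((X *m Z)^T *m D *m (X *m Z) *m F) by rewrite !trmx_mul !mulmxA.
by rewrite F_eig mulmxA F_orth mul1mx.
Qed.

Lemma gpca_location_gram :
  (X *m P *m Sg *m A)^T *m D *m (X *m P *m Sg *m A) = diag_mx d.
Proof.
have -> : (X *m P *m Sg *m A)^T *m D *m (X *m P *m Sg *m A)
    = A^T *m Sg *m ((X *m P)^T *m D *m (X *m P) *m Sg *m A).
  by rewrite !trmx_mul Sg_sym !mulmxA.
by rewrite A_eig mulmxA A_norm mul1mx.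
Qed.

Lemma gpca_location_eig :
  X *m Z *m F *m F^T = X *m Z ->
  (X *m Z *m F) *m (X *m Z *m F)^T *m D *m (X *m P *m Sg *m A)
  = X *m P *m Sg *m A *m diag_mx d.
Proof.
move=> YFFt.
have -> : (X *m Z *m F) *m (X *m Z *m F)^T = X *m P *m Sg *m (X *m P)^T.
  by rewrite trmx_mul mulmxA YFFt !trmx_mul !mulmxA -(mulmxA X) ZZt !mulmxA.
by rewrite -[RHS]mulmxA -A_eig !mulmxA.
Qed.

(* Species coordinates are the metric images of the location coordinates, so
   a sign relation between location coordinates transfers to the species. *)
Lemma species_from_locations (e : 'rV[R]_r) :
  (forall i, d 0 i != 0) ->
  X *m P *m Sg *m A = X *m Z *m F *m diag_mx e ->
  P *m Sg *m A = Z *m F *m diag_mx e.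
Proof.
move=> dnz loc.
have ZFd : Z *m F *m diag_mx d = P *m Sg *m P^T *m X^T *m D *m (X *m Z *m F).
  by rewrite -mulmxA -F_eig trmx_mul !mulmxA ZZt.
have PSgAd : P *m Sg *m A *m diag_mx d
    = P *m Sg *m P^T *m X^T *m D *m (X *m P *m Sg *m A).
  by rewrite -mulmxA -A_eig trmx_mul !mulmxA.
have ediag : diag_mx e *m diag_mx d = diag_mx d *m diag_mx e.
  by rewrite !mulmx_diag; congr diag_mx; apply/rowP => j; rewrite !mxE mulrC.
have cancel_d : P *m Sg *m A *m diag_mx d = Z *m F *m diag_mx e *m diag_mx d.
  by rewrite PSgAd loc (mulmxA _ _ (diag_mx e)) -ZFd -!mulmxA ediag.
apply/matrixP => s j; apply: (mulIf (dnz j)).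
by move/matrixP/(_ s j): cancel_d; rewrite !mul_mx_diag !mxE.
Qed.

End Coordinates.

Section Centering.
Variable R : rcfType.

Lemma Pmat_ones (n : nat) (w : 'rV[R]_n) : \sum_i w 0 i = 1 -> Pmat w *m ones R n = 0.
Proof.
move=> wsum; rewrite /Pmat mulmxBl mul1mx -mulmxA.
have -> : w *m ones R n = 1%:M.
  apply/matrixP => a b; rewrite !ord1 !mxE /= -[RHS]wsum.
  by apply: eq_bigr => j _; rewrite !mxE mulr1.
by rewrite mulmx1 subrr.
Qed.

Lemma Pmat_Sigma_Pmat (n : nat) (w : 'rV[R]_n) (v : 'cV[R]_n) (Delta : 'M[R]_n) :
  \sum_i w 0 i = 1 ->
  Pmat w *m Sigma v Delta *m (Pmat w)^T = Pmat w *m (- (2^-1 *: Delta)) *m (Pmat w)^T.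
Proof.
move=> wsum; have P1 := Pmat_ones wsum.
have left0 : Pmat w *m (ones R n *m v^T) = 0 by rewrite mulmxA P1 mul0mx.
have right0 : Pmat w *m (v *m (ones R n)^T) *m (Pmat w)^T = 0.
  by rewrite -!mulmxA -trmx_mul P1 trmx0 !mulmx0.
by rewrite /Sigma !mulmxDr left0 add0r (mulmxDl (Pmat w *m _)) right0 add0r.
Qed.

Lemma Sigma_sym (n : nat) (v : 'cV[R]_n) (Delta : 'M[R]_n) :
  Delta^T = Delta -> (Sigma v Delta)^T = Sigma v Delta.
Proof.
move=> Dsym; have Dji i j : Delta j i = Delta i j by rewrite -{1}Dsym mxE.
by apply/matrixP => i j; rewrite !mxE !big_ord1 !mxE Dji; ring.
Qed.

Lemma Dinvsqrt_Dsqrt (n : nat) (w : 'rV[R]_n) :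
  (forall i, 0 < w 0 i) ->
  Dinvsqrt w *m Dsqrt w = 1%:M /\ Dsqrt w *m Dinvsqrt w = 1%:M.
Proof.
move=> wpos; have sqrt_neq0 i : Num.sqrt (w 0 i) != 0 by rewrite gt_eqF // sqrtr_gt0.
split; apply/matrixP => i j; rewrite mul_diag_mx !mxE;
  by case: eqVneq => _; rewrite ?mulr1n ?mulr0n ?mulr0 ?mulVf ?mulfV.
Qed.

End Centering.

Section DPCoAMetric.
Variable R : rcfType.

Definition dpcoaZ (S k : nat) (wS : 'rV[R]_S) (U : 'M[R]_(S, k)) (lam : 'rV[R]_k) :
  'M[R]_(S, k) := Dinvsqrt wS *m U *m diag_mx (map_mx (fun x => Num.sqrt x) lam).

(* Z factors the centered metric: since U, lam carry the whole nonzero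
   spectrum of D^{1/2} P (-Delta/2) P^T D^{1/2}, we get
   Z Z^T = P (-Delta/2) P^T = P Sigma P^T. *)
Lemma dpcoaZ_gram (S k : nat) (wS : 'rV[R]_S) (Delta : 'M[R]_S) (v : 'cV[R]_S)
    (U : 'M[R]_(S, k)) (lam : 'rV[R]_k) :
  let B := Dsqrt wS *m Pmat wS *m (- (2^-1 *: Delta)) *m (Pmat wS)^T *m Dsqrt wS in
  weight wS -> Delta^T = Delta ->
  psd (Pmat wS *m (- (2^-1 *: Delta)) *m (Pmat wS)^T) ->
  U^T *m U = 1%:M -> B *m U = U *m diag_mx lam -> (forall i, 0 < lam 0 i) ->
  char_poly B = 'X^(S - k) * \prod_(i < k) ('X - (lam 0 i)%:P) ->
  dpcoaZ wS U lam *m (dpcoaZ wS U lam)^T = Pmat wS *m Sigma v Delta *m (Pmat wS)^T.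
Proof.
move=> B [wpos wsum] Dsym Npsd Uorth Ueig lampos lamchar.
have [DiDs DsDi] := Dinvsqrt_Dsqrt wpos.
have DsT : (Dsqrt wS)^T = Dsqrt wS by rewrite tr_diag_mx.
have DiT : (Dinvsqrt wS)^T = Dinvsqrt wS by rewrite tr_diag_mx.
have NT : (- (2^-1 *: Delta))^T = - (2^-1 *: Delta).
  by apply/matrixP => i j; rewrite !mxE -[in RHS]Dsym mxE.
have Bsym : B^T = B by rewrite /B !trmx_mul !trmxK NT DsT !mulmxA.
have Bpsd : psd B.
  move=> x; have -> : x^T *m B *m x = (Dsqrt wS *m x)^T
      *m (Pmat wS *m (- (2^-1 *: Delta)) *m (Pmat wS)^T) *m (Dsqrt wS *m x).
    by rewrite /B trmx_mul DsT !mulmxA.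
  exact: Npsd.
have Bspec := psd_spectral_decomposition Bsym Bpsd Uorth Ueig lamchar.
have LhLh : diag_mx (map_mx (fun x => Num.sqrt x) lam)
    *m diag_mx (map_mx (fun x => Num.sqrt x) lam) = diag_mx lam.
  rewrite mulmx_diag; congr diag_mx; apply/rowP => j.
  by rewrite !mxE -expr2 sqr_sqrtr // ltW.
have PNP : Pmat wS *m (- (2^-1 *: Delta)) *m (Pmat wS)^T
    = Dinvsqrt wS *m B *m Dinvsqrt wS.
  by rewrite /B !mulmxA DiDs mul1mx -[RHS]mulmxA DsDi mulmx1.
rewrite Pmat_Sigma_Pmat // PNP Bspec /dpcoaZ !trmx_mul tr_diag_mx DiT -LhLh.
by rewrite !mulmxA.
Qed.

End DPCoAMetric.

Theorem mainTheorem1 (R : rcfType) (L S : nat)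
  (X : 'M[R]_(L, S)) (wS : 'rV[R]_S) (wL : 'rV[R]_L)
  (Delta : 'M[R]_S) (v : 'cV[R]_S)
  (* context hypotheses *)
  (hXnn : forall l s, 0 <= X l s)
  (hXrow : forall l, \sum_s X l s = 1)
  (hwS : weight wS) (hwL : weight wL)
  (hDsym : Delta^T = Delta)
  (hDdiag : forall s, Delta s s = 0)
  (hDeucl : psd (Pmat wS *m (- (2^-1 *: Delta)) *m (Pmat wS)^T))
  (hSig : posdef (Sigma v Delta))
  (* DPCoA *)
  (k : nat) (U : 'M[R]_(S, k)) (lam : 'rV[R]_k)
  (hUorth : U^T *m U = 1%:M)
  (hUeig : (Dsqrt wS *m Pmat wS *m (- (2^-1 *: Delta)) *m (Pmat wS)^T *m Dsqrt wS)
             *m U = U *m diag_mx lam)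
  (hlampos : forall i, 0 < lam 0 i)
  (hlamall : char_poly (Dsqrt wS *m Pmat wS *m (- (2^-1 *: Delta)) *m (Pmat wS)^T
                        *m Dsqrt wS)
             = 'X^(S - k) * \prod_(i < k) ('X - (lam 0 i)%:P))
  (r : nat) (hr : r = \rank (X *m (Dinvsqrt wS *m U *m diag_mx (map_mx (fun x => Num.sqrt x) lam))))
  (phi : 'rV[R]_r) (F : 'M[R]_(k, r))
  (hForth : F^T *m F = 1%:M)
  (hFeig : let Y := X *m (Dinvsqrt wS *m U *m diag_mx (map_mx (fun x => Num.sqrt x) lam)) in
           (Y^T *m Dw wL *m Y) *m F = F *m diag_mx phi)
  (hphinz : forall i, phi 0 i != 0)
  (hphiall : let Y := X *m (Dinvsqrt wS *m U *m diag_mx (map_mx (fun x => Num.sqrt x) lam)) in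
             char_poly (Y^T *m Dw wL *m Y) = 'X^(k - r) * \prod_(i < r) ('X - (phi 0 i)%:P))
  (hphidec : nonincreasing_diag phi)
  (* gPCA *)
  (r' : nat) (psi : 'rV[R]_r') (A : 'M[R]_(S, r'))
  (hAnorm : A^T *m Sigma v Delta *m A = 1%:M)
  (hAeig : ((X *m Pmat wS)^T *m Dw wL *m (X *m Pmat wS) *m Sigma v Delta) *m A
           = A *m diag_mx psi)
  (hpsinz : forall i, psi 0 i != 0)
  (hpsiall : char_poly ((X *m Pmat wS)^T *m Dw wL *m (X *m Pmat wS) *m Sigma v Delta)
             = 'X^(S - r') * \prod_(i < r') ('X - (psi 0 i)%:P))
  (hpsidec : nonincreasing_diag psi) :
  let Z := Dinvsqrt wS *m U *m diag_mx (map_mx (fun x => Num.sqrt x) lam) in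
  let Y := X *m Z in
  r' = r /\
  (forall (i : 'I_r) (j : 'I_r'), nat_of_ord i = nat_of_ord j -> psi 0 j = phi 0 i) /\
  ((forall i j : 'I_r, phi 0 i = phi 0 j -> i = j) ->
   exists e : 'rV[R]_r',
     (forall j, e 0 j = 1 \/ e 0 j = -1) /\
     (forall (l : 'I_L) (i : 'I_r) (j : 'I_r'), nat_of_ord i = nat_of_ord j ->
        (Y *m F) l i = (X *m Pmat wS *m Sigma v Delta *m A *m diag_mx e) l j) /\
     (forall (s : 'I_S) (i : 'I_r) (j : 'I_r'), nat_of_ord i = nat_of_ord j ->
        (Z *m F) s i = (Pmat wS *m Sigma v Delta *m A *m diag_mx e) s j)).
Proof.
move=> Z Y.
have [wLpos _] := hwL.
have ZZt : Z *m Z^T = Pmat wS *m Sigma v Delta *m (Pmat wS)^T :=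
  dpcoaZ_gram v hwS hDsym hDeucl hUorth hUeig hlampos hlamall.
have [r'r spectra] := nonzero_spectra_eq (dpcoa_gpca_char_poly X (Dw wL) ZZt)
  hphiall hpsiall hphinz hpsinz.
subst r'; have phi_psi := nonincreasing_diag_eq hphidec hpsidec spectra.
subst psi; split => //; split => [i j /ord_inj -> //|phi_simple].
have YFFt : Y *m F *m F^T = Y := eigvecs_span_rows wLpos hForth hFeig hphiall.
have [e esign loc] := eigvecs_unique_up_to_sign phi_simple hphinz
  (dpcoa_location_gram hForth hFeig)
  (gpca_location_gram (Sigma_sym v hDsym) hAnorm hAeig)
  (gpca_location_eig ZZt hAeig YFFt).
have spec := species_from_locations ZZt hFeig hAeig hphinz loc.
exists e; split => //; split => [l i j /ord_inj ->|s i j /ord_inj ->].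
- by rewrite loc -(mulmxA _ (diag_mx e)) diag_sign_invol ?mulmx1.
- by rewrite spec -(mulmxA _ (diag_mx e)) diag_sign_invol ?mulmx1.
Qed.
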